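(* Let $M\in S_d^+$ and let $\mathcal T$ be an $M$-reduced mesh. Let $z\in\mathbb Z^d$. Then there exists $T\in\mathcal T$ with $-z\in\mathbb R_+T:=\{rx;\ r\ge0,\ x\in T\}$; and for any $T\in\mathcal T$ with $-z\in\mathbb R_+T$, denoting by $v_1,\dots,v_d$ the non-zero vertices of $T$, there exist non-negative integers $\beta_1,\dots,\beta_d$ such that $z+\beta_1v_1+\dots+\beta_dv_d=0$.
   Context: $S_d^+$ is the set of $d\times d$ symmetric positive definite matrices; $\langle u,v\rangle_M:=u^TMv$. An $M$-reduced mesh is a finite conforming mesh $\mathcal T$ of simplices in $\mathbb R^d$ such that: (I) the union of its simplices is a neighborhood of the origin; (II) the vertices of each $T\in\mathcal T$ lie in $\mathbb Z^d$ and $T$ has volume $1/d!$; (III) each $T\in\mathcal T$ has the origin as a vertex, and its other vertices $v_1,\dots,v_d$ satisfy $\langle v_i,v_j\rangle_M\ge0$ for all $i,j$. *)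

From HB Require Import structures.
From mathcomp Require Import all_boot all_order all_algebra.
From mathcomp Require Import reals.
Set Implicit Arguments. Unset Strict Implicit. Unset Printing Implicit Defensive.
Import Order.TTheory GRing.Theory Num.Theory.
Local Open Scope ring_scope.

(* A simplex of an M-reduced mesh has the origin as a vertex; it is encoded by
   the integer matrix V : 'M[int]_d whose rows are its other vertices v_1..v_d
   (so its vertices lie in Z^d by construction). *)

Definition intmx (R : realType) m n (A : 'M[int]_(m, n)) : 'M[R]_(m, n) :=
  map_mx (fun x : int => x%:~R) A.

Definition vertex (R : realType) d (V : 'M[int]_d) (i : option 'I_d) : 'rV[R]_d :=
  if i is Some j then row j (intmx R V) else 0.

Definition face (R : realType) d (V : 'M[int]_d) (S : {set option 'I_d})
    (x : 'rV[R]_d) : Prop :=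
  exists lam : option 'I_d -> R,
    [/\ (forall i, 0 <= lam i), (forall i, i \notin S -> lam i = 0),
        \sum_i lam i = 1 & x = \sum_i lam i *: vertex R V i].

Definition simplex (R : realType) d (V : 'M[int]_d) (x : 'rV[R]_d) : Prop :=
  face V setT x.

Definition cone (R : realType) d (V : 'M[int]_d) (x : 'rV[R]_d) : Prop :=
  exists r : R, 0 <= r /\ exists y, simplex V y /\ x = r *: y.

Definition volume (R : realType) d (V : 'M[int]_d) : R :=
  `| (\det V)%:~R | / (d`!)%:R.

Definition conforming (R : realType) d (mesh : seq 'M[int]_d) : Prop :=
  forall V V', V \in mesh -> V' \in mesh ->
    exists S S' : {set option 'I_d}, forall x : 'rV[R]_d,
      ((simplex V x /\ simplex V' x) <-> face V S x) /\
      ((simplex V x /\ simplex V' x) <-> face V' S' x).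

Definition nbhd_origin (R : realType) d (mesh : seq 'M[int]_d) : Prop :=
  exists e : R, 0 < e /\ forall x : 'rV[R]_d, (forall i, `|x 0 i| < e) ->
    exists V, V \in mesh /\ simplex V x.

Definition Mdot (R : realType) d (M : 'M[R]_d) (u v : 'rV[R]_d) : R :=
  (u *m M *m v^T) 0 0.

Definition sym_posdef (R : realType) d (M : 'M[R]_d) : Prop :=
  M^T = M /\ forall u : 'rV[R]_d, u != 0 -> 0 < Mdot M u u.

Definition M_reduced (R : realType) d (M : 'M[R]_d) (mesh : seq 'M[int]_d) : Prop :=
  [/\ conforming R mesh,
      nbhd_origin R mesh,
      (forall V, V \in mesh -> volume R V = 1 / (d`!)%:R) &
      (forall V, V \in mesh -> forall i j : 'I_d,
          0 <= Mdot M (vertex R V (Some i)) (vertex R V (Some j)))].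

(* A vector is a nonnegative multiple of a point of some simplex as soon as it
   is scaled into the neighbourhood of the origin covered by the mesh.  The
   volume condition says that the vertex matrix V is unimodular, so every
   integer vector has integer coordinates in the basis v_1, ..., v_d; when
   -z lies in the cone over T these coordinates are the (unique) cone
   coefficients, hence nonnegative integers. *)
From HB Require Import structures.
From mathcomp Require Import all_boot all_order all_algebra.
From mathcomp Require Import reals.
Set Implicit Arguments. Unset Strict Implicit. Unset Printing Implicit Defensive.
Import Order.TTheory GRing.Theory Num.Theory.
Local Open Scope ring_scope.

Lemma big_option_ord (V : nmodType) d (F : option 'I_d -> V) :
  \sum_i F i = F None + \sum_j F (Some j).
Proof.
rewrite (bigD1 None) //=; congr (_ + _).
rewrite (reindex_omap Some id) /=; last by case.
by apply: eq_bigl => j; rewrite eqxx.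
Qed.

Section Cone.
Variables (R : realType) (d : nat).

Lemma cone_coordP (V : 'M[int]_d) (x : 'rV[R]_d) :
  cone V x -> exists2 c : 'rV[R]_d, (forall i, 0 <= c 0 i) & x = c *m intmx R V.
Proof.
move=> [r [r0 [y [[lam [lam0 _ _ ->]] ->]]]].
exists (\row_j (r * lam (Some j))) => [i|]; first by rewrite mxE mulr_ge0.
rewrite mulmx_sum_row big_option_ord /= scaler0 add0r scaler_sumr.
by apply: eq_bigr => j _; rewrite mxE scalerA.
Qed.

Lemma cone_scale (V : 'M[int]_d) (x : 'rV[R]_d) (r : R) :
  0 < r -> simplex V (r *: x) -> cone V x.
Proof.
move=> r0 Tx; exists r^-1; split; first by rewrite invr_ge0 ltW.
by exists (r *: x); rewrite scalerA mulVf ?gt_eqF // scale1r.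
Qed.

Lemma small_multiple (x : 'rV[R]_d) (e : R) :
  0 < e -> exists2 r : R, 0 < r & forall i, `|(r *: x) 0 i| < e.
Proof.
move=> e0; set N : R := 1 + \sum_i `|x 0 i|.
have N0 : 0 < N by rewrite ltr_wpDr ?sumr_ge0.
exists (e / N) => [|i]; first by rewrite divr_gt0.
rewrite mxE normrM gtr0_norm ?divr_gt0 // -ltr_pdivlMl ?divr_gt0 //.
rewrite invf_div divfK ?gt_eqF // /N (bigD1 i) //= addrCA ltrDl.
by rewrite (lt_le_trans ltr01) // lerDl sumr_ge0.
Qed.

Lemma nbhd_origin_cone (mesh : seq 'M[int]_d) (x : 'rV[R]_d) :
  nbhd_origin R mesh -> exists V, V \in mesh /\ cone V x.
Proof.
move=> [e [e0 cover]]; have [r r0 small] := small_multiple x e0.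
have [V [Vmesh Tx]] := cover _ small.
by exists V; split; last exact: cone_scale Tx.
Qed.

End Cone.

Lemma volume_unimodular (R : realType) d (V : 'M[int]_d) :
  volume R V = 1 / (d`!)%:R -> \det V * \det V = 1.
Proof.
rewrite /volume => /(congr1 ( *%R^~ (d`!)%:R)).
have f0 : (d`!)%:R != 0 :> R by rewrite pnatr_eq0 -lt0n fact_gt0.
rewrite !divfK // -intr_norm -[1]/(1%:~R) => /eqP; rewrite eqr_int => /eqP det1.
by rewrite -expr2 -(real_normK (num_real _)) det1 expr1n.
Qed.

Section Unimodular.
Variables (d : nat) (V : 'M[int]_d).
Hypothesis detV : \det V * \det V = 1.

Lemma unimodular_coord (z : 'rV[int]_d) :
  (\det V *: (z *m \adj V)) *m V = z.
Proof.
by rewrite -scalemxAl -mulmxA mul_adj_mx mul_mx_scalar scalerA detV scale1r.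
Qed.

Lemma unimodular_unitmx (R : realType) : intmx R V \in unitmx.
Proof.
rewrite unitmxE unitfE /intmx det_map_mx /=; apply/eqP => /(congr1 (fun t => t * t)).
by rewrite -rmorphM detV mul0r; apply/eqP; rewrite oner_eq0.
Qed.

Lemma unimodular_int_coord (R : realType) (w : 'rV[int]_d) (c : 'rV[R]_d) :
  c *m intmx R V = intmx R (w *m V) -> c = intmx R w.
Proof.
move=> eq_cw; have unitV := unimodular_unitmx R.
by rewrite -(mulmxK unitV c) eq_cw /intmx map_mxM mulmxK.
Qed.

End Unimodular.

Lemma nonneg_int_comb d (V : 'M[int]_d) (w : 'rV[int]_d) :
  (forall i, 0 <= w 0 i) ->
  \sum_(i < d) ((absz (w 0 i))%:Z *: row i V) = w *m V.
Proof.
by move=> w0; rewrite mulmx_sum_row; apply: eq_bigr => i _; rewrite gez0_abs.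
Qed.

Theorem lemma1p5 (R : realType) (d : nat) (M : 'M[R]_d)
    (mesh : seq 'M[int]_d) (z : 'rV[int]_d) :
  sym_posdef M -> M_reduced M mesh ->
  (exists V, V \in mesh /\ cone V (- intmx R z)) /\
  (forall V, V \in mesh -> cone V (- intmx R z) ->
     exists beta : 'I_d -> nat,
       z + \sum_(i < d) ((beta i)%:Z *: row i V) = 0).
Proof.
move=> _ [_ cover vol _]; split; first exact: nbhd_origin_cone.
move=> V Vmesh /cone_coordP [c c0 zc].
have detV := volume_unimodular (vol V Vmesh).
set w := \det V *: (- z *m \adj V).
have wV : w *m V = - z by exact: unimodular_coord.
have cw : c = intmx R w.
  by apply: (unimodular_int_coord detV); rewrite wV /intmx map_mxN -zc.
have w0 i : 0 <= w 0 i by move: (c0 i); rewrite cw mxE ler0z.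
exists (fun i => absz (w 0 i)).
by rewrite nonneg_int_comb // wV addrN.
Qed.
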